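(* Let $(\mathfrak g,[\cdot,\cdot]_{\mathfrak g},E)$ be an ENL algebra and $K:W\to\mathfrak g$ an ENE-relative Rota–Baxter operator with respect to an ENE-representation $(W;T,\rho)$. Define $[u,v]_K:=\rho(Ku)v-\rho(Kv)u$ for $u,v\in W$. Then $(W,[\cdot,\cdot]_K,T)$ is an ENL algebra.
   Context: Vector spaces are finite-dimensional over an algebraically closed field of characteristic zero. An ENL algebra is a Lie algebra with linear $E$ satisfying $E[x,y]=[x,Ey]$ for all $x,y$. An ENE-representation $(W;T,\rho)$ of $(\mathfrak g,E)$ is a Lie algebra representation $\rho:\mathfrak g\to\mathfrak{gl}(W)$ with linear $T:W\to W$ such that $T(\rho(x)u)=\rho(Ex)u=\rho(x)(Tu)$. An ENE-relative Rota–Baxter operator with respect to $(W;T,\rho)$ is a linear $K:W\to\mathfrak g$ with $[Ku,Kv]_{\mathfrak g}=K(\rho(Ku)v-\rho(Kv)u)$ for all $u,v\in W$ and $E\circ K=K\circ T$. *)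

From HB Require Import structures.
From mathcomp Require Import all_boot all_algebra.
Set Implicit Arguments. Unset Strict Implicit. Unset Printing Implicit Defensive.
Import GRing.Theory.
Local Open Scope ring_scope.

Definition is_linear (F : fieldType) (V W : vectType F) (f : V -> W) : Prop :=
  forall (a : F) (x y : V), f (a *: x + y) = a *: f x + f y.

Definition is_lie_bracket (F : fieldType) (V : vectType F) (br : V -> V -> V) : Prop :=
  [/\ (forall z : V, is_linear (fun x => br x z)),
      (forall x : V, is_linear (br x)),
      (forall x : V, br x x = 0) &
      (forall x y z : V, br x (br y z) + br y (br z x) + br z (br x y) = 0)].

Definition is_ENL (F : fieldType) (V : vectType F) (br : V -> V -> V) (E : V -> V) : Prop :=
  [/\ is_lie_bracket br, is_linear E &
      (forall x y : V, E (br x y) = br x (E y))].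

Definition is_lie_rep (F : fieldType) (g W : vectType F) (brg : g -> g -> g)
  (rho : g -> W -> W) : Prop :=
  [/\ (forall u : W, is_linear (fun x => rho x u)),
      (forall x : g, is_linear (rho x)) &
      (forall (x y : g) (u : W), rho (brg x y) u = rho x (rho y u) - rho y (rho x u))].

Definition is_ENE_rep (F : fieldType) (g W : vectType F) (brg : g -> g -> g)
  (E : g -> g) (T : W -> W) (rho : g -> W -> W) : Prop :=
  [/\ is_lie_rep brg rho, is_linear T &
      (forall (x : g) (u : W), T (rho x u) = rho (E x) u /\ rho (E x) u = rho x (T u))].

Definition is_ENE_RB (F : fieldType) (g W : vectType F) (brg : g -> g -> g)
  (E : g -> g) (T : W -> W) (rho : g -> W -> W) (K : W -> g) : Prop :=
  [/\ is_linear K,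
      (forall u v : W, brg (K u) (K v) = K (rho (K u) v - rho (K v) u)) &
      (forall u : W, E (K u) = K (T u))].

Definition bracketK (F : fieldType) (g W : vectType F) (rho : g -> W -> W) (K : W -> g)
  (u v : W) : W := rho (K u) v - rho (K v) u.

From HB Require Import structures.
From mathcomp Require Import all_boot all_algebra.
Import GRing.Theory.
Local Open Scope ring_scope.

(* The Rota-Baxter identity says that K transports [.,.]_K to the bracket of g,
   so rho (K [v,w]_K) = [rho (K v), rho (K w)]; with this, the Jacobi sum of
   [.,.]_K expands into six compositions of the operators rho (K _) that cancel
   in pairs. The ENE conditions on T and K give T [u,v]_K = [u, T v]_K directly. *)

Section IsLinear.
Context {F : fieldType} {V U : vectType F} {f : V -> U}.
Hypothesis f_lin : is_linear f.

Lemma is_linearD x y : f (x + y) = f x + f y.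
Proof. by have := f_lin 1 x y; rewrite !scale1r. Qed.

Lemma is_linear0 : f 0 = 0.
Proof. by apply/(addrI (f 0)); rewrite -is_linearD !addr0. Qed.

Lemma is_linearB x y : f (x - y) = f x - f y.
Proof.
have fN z : f (- z) = - f z.
  by rewrite -(addr0 (- z)) -scaleN1r f_lin is_linear0 addr0 scaleN1r.
by rewrite is_linearD fN.
Qed.

End IsLinear.

Lemma cyclic_difference_sum0 (V : zmodType) (a b c d e h : V) :
  (a - b - (c - d)) + (c - e - (h - b)) + (h - d - (a - e)) = 0.
Proof.
rewrite !opprB !addrA subrK subrK.
rewrite [a - b + d - e + b]addrAC [a - b + d + b]addrAC subrK.
by rewrite [a + d - e - d]addrAC addrK subrK subrr.
Qed.

Section InducedBracket.
Variables (F : fieldType) (g W : vectType F).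
Variables (brg : g -> g -> g) (rho : g -> W -> W) (K : W -> g).
Hypothesis rho_rep : is_lie_rep brg rho.
Hypothesis K_lin : is_linear K.
Hypothesis K_morph : forall u v : W, brg (K u) (K v) = K (bracketK rho K u v).

Lemma bracketK_linearl z : is_linear (bracketK rho K ^~ z).
Proof.
have [rho_linl rho_linr _] := rho_rep.
move=> a x y; rewrite /bracketK K_lin rho_linl (rho_linr (K z)) scalerBr.
by rewrite !opprD !addrA; congr (_ + _); rewrite addrAC.
Qed.

Lemma bracketK_linearr u : is_linear (bracketK rho K u).
Proof.
have [rho_linl rho_linr _] := rho_rep.
move=> a x y; rewrite /bracketK K_lin rho_linl (rho_linr (K u)) scalerBr.
by rewrite !opprD !addrA; congr (_ + _); rewrite addrAC.
Qed.

Lemma bracketKK u : bracketK rho K u u = 0.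
Proof. exact: subrr. Qed.

Lemma bracketK_jacobi u v w : bracketK rho K u (bracketK rho K v w)
  + bracketK rho K v (bracketK rho K w u) + bracketK rho K w (bracketK rho K u v) = 0.
Proof.
have [_ rho_linr rho_morph] := rho_rep.
rewrite /bracketK -!K_morph !rho_morph !(is_linearB (rho_linr _)).
exact: cyclic_difference_sum0.
Qed.

Lemma is_lie_bracketK : is_lie_bracket (bracketK rho K).
Proof.
split; [exact: bracketK_linearl | exact: bracketK_linearr | exact: bracketKK |].
exact: bracketK_jacobi.
Qed.

End InducedBracket.

Lemma bracketK_ENE (F : fieldType) (g W : vectType F) (brg : g -> g -> g)
    (E : g -> g) (T : W -> W) (rho : g -> W -> W) (K : W -> g) :
  is_ENE_rep brg E T rho -> (forall u, E (K u) = K (T u)) ->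
  forall u v, T (bracketK rho K u v) = bracketK rho K u (T v).
Proof.
move=> [_ T_lin rho_T] EK u v.
rewrite /bracketK (is_linearB T_lin) -EK.
by have [-> ->] := rho_T (K u) v; have [->] := rho_T (K v) u.
Qed.

Theorem proposition6p3 (F : closedFieldType) (charF0 : [pchar F] =i pred0)
  (g W : vectType F) (brg : g -> g -> g) (E : g -> g)
  (T : W -> W) (rho : g -> W -> W) (K : W -> g) :
  is_ENL brg E ->
  is_ENE_rep brg E T rho ->
  is_ENE_RB brg E T rho K ->
  is_ENL (bracketK rho K) T.
Proof.
move=> _ ENE_rep [K_lin K_morph EK].
have [rho_rep T_lin _] := ENE_rep.
split=> //; first exact: is_lie_bracketK rho_rep K_lin K_morph.
exact: bracketK_ENE ENE_rep EK.
Qed.
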